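(* There are positive constants $c$ and $b$, not depending on $\varepsilon$, such that for every $t\ge0$, all integers $n>0$, $m\ge0$ and all initial positions $\underline x_0=(x_1,\dots,x_n)$, $\underline y_0=(y_1,\dots,y_{n+m})$ in $\Lambda_\varepsilon$, the coupled process started from $(\underline x_0,\{1,\dots,n\},\underline y_0,\{1,\dots,n+m\},n+m)$ satisfies $$\hat E\big[|D_{\ne}(t)|\big]\le c\,n\,e^{-b\varepsilon^2t},$$ where $D_{\ne}(t)=\{i\in I(t):x_i(t)\ne y_i(t)\}$ and $\hat E$ is expectation for the coupled process.
   Context: Fix $j>0$, $\varepsilon>0$ with $\varepsilon^{-1}\in\mathbb N$, $\Lambda_\varepsilon=\{0,\dots,\varepsilon^{-1}\}$. A labeled configuration is $(\underline x,I)$ with $I\subset\mathbb N$ finite, $x_i\in\Lambda_\varepsilon$. State space $S$: all $(\underline x,I,\underline y,J,N)$ with $I\subset J$, $|J\setminus I|\le m$, $N=\max J$. $I_==\{i\in I:x_i=y_i\}$. The coupled process is the Markov jump process on $S$ with jumps: (1) for each $i\in I\setminus I_=$ and sign $\pm$, at rate $1/2$, $x_i\to x_i\pm1$ (suppressed if outside $\Lambda_\varepsilon$); for each $i\in J\setminus I_=$ and sign, at rate $1/2$, $y_i\to y_i\pm1$ (suppressed if outside); (2) for each $i\in I_=$ and sign, at rate $1/2$, $x_i,y_i$ both move to $x_i\pm1$ (suppressed if outside); (3) at rate $\varepsilon j$: $N\to N+1$, label $N+1$ added to $I$ and $J$ with $x_{N+1}=y_{N+1}=0$; (4) at rate $\varepsilon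 j$: let $i$ be the largest label at the rightmost occupied site of $\underline x$ and $k$ the largest label at the rightmost occupied site of $\underline y$; remove $i$ from $\underline x,I$ and $k$ from $\underline y,J$; if $k\in I$ and $i\ne k$ then: if $x_k\le y_i$ relabel the $\underline y$-particle $i$ as $k$; otherwise relabel the $\underline x$-particle $k$ as $i$; $N$ unchanged. *)

From Stdlib Require Import Reals List Arith Bool.
From Coquelicot Require Import Coquelicot.
Import ListNotations.
Open Scope R_scope.

(** * Continuous-time Markov jump processes on a countable state space with
    finitely many transitions out of each state: the (minimal) process is
    defined analytically through Feller's backward recursion.
    [trans s] lists the pairs (rate, target state) of the jumps out of [s].
    [mjp_term trans f k t s] = E_s[ f(X_t) ; exactly k jumps in [0,t] ]:
      term 0     : exp(-q(s) t) f(s)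
      term (k+1) : int_0^t exp(-q(s) u) sum_{(r,s')} r * term k (t-u) s' du
    (first jump at time u, to s'), q(s) = total jump rate out of s.
    The expectation E_s[f(X_t)] is the sum over k (an Rbar limit of the
    nondecreasing partial sums when f >= 0). *)

Definition total_rate {S : Type} (trans : S -> list (R * S)) (s : S) : R :=
  fold_right Rplus 0 (map fst (trans s)).

Fixpoint mjp_term {S : Type} (trans : S -> list (R * S)) (f : S -> R)
  (k : nat) (t : R) (s : S) : R :=
  match k with
  | O => exp (- total_rate trans s * t) * f s
  | S k' =>
      RInt (fun u => exp (- total_rate trans s * u) *
              fold_right Rplus 0
                (map (fun p => fst p * mjp_term trans f k' (t - u) (snd p))
                     (trans s))) 0 t
  end.

Definition mjp_expect {S : Type} (trans : S -> list (R * S)) (f : S -> R)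
  (t : R) (s : S) : Rbar :=
  Lim_seq (fun K => sum_n (fun k => mjp_term trans f k t s) K).

(** Labels are positive naturals.  A state (x, I, y, J, N) is encoded by
    [sx i = Some x_i] iff i \in I, [sy i = Some y_i] iff i \in J, and the
    label counter [sN] (all labels ever used are in 1..sN).
    Lambda_eps = {0,...,L} with L = eps^{-1}. *)

Record cstate := mkC { sx : nat -> option nat; sy : nat -> option nat; sN : nat }.

Definition upd (f : nat -> option nat) (i : nat) (v : option nat) :=
  fun k => if Nat.eqb k i then v else f k.

(* largest label at the rightmost occupied site, among labels 1..N *)
Definition rightmost (f : nat -> option nat) (N : nat) : option nat :=
  fold_left (fun acc i =>
     match f i with
     | None => acc
     | Some p => match acc with
                 | None => Some i
                 | Some i' => match f i' with
                              | Some p' => if Nat.leb p' p then Some i else acc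
                              | None => Some i
                              end
                 end
     end) (seq 1 N) None.

(* moves of a single position a in {0..L}: target positions, each at rate 1/2,
   moves leaving Lambda_eps are suppressed (no jump) *)
Definition moves (L a : nat) : list nat :=
  (if Nat.leb (S a) L then [S a] else []) ++
  (match a with O => [] | S a' => [a'] end).

Definition label_trans (L : nat) (s : cstate) (i : nat) : list (R * cstate) :=
  match sx s i, sy s i with
  | Some a, Some b =>
      if Nat.eqb a b then
        map (fun a' => (/2, mkC (upd (sx s) i (Some a')) (upd (sy s) i (Some a')) (sN s)))
            (moves L a)
      else
        map (fun a' => (/2, mkC (upd (sx s) i (Some a')) (sy s) (sN s))) (moves L a) ++
        map (fun b' => (/2, mkC (sx s) (upd (sy s) i (Some b')) (sN s))) (moves L b)
  | None, Some b =>
      map (fun b' => (/2, mkC (sx s) (upd (sy s) i (Some b')) (sN s))) (moves L b)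
  | _, _ => []
  end.

Definition inject (s : cstate) : cstate :=
  mkC (upd (sx s) (S (sN s)) (Some O)) (upd (sy s) (S (sN s)) (Some O)) (S (sN s)).

(* (4) removal; if x is empty only the y-particle is removed, and if y is
   empty there is no jump *)
Definition remove (s : cstate) : option cstate :=
  match rightmost (sy s) (sN s) with
  | None => None
  | Some k =>
    match rightmost (sx s) (sN s) with
    | None => Some (mkC (sx s) (upd (sy s) k None) (sN s))
    | Some i =>
      let x' := upd (sx s) i None in
      let y' := upd (sy s) k None in
      match sx s k, sy s i with
      | Some xk, Some yi =>
          if Nat.eqb i k then Some (mkC x' y' (sN s))
          else if Nat.leb xk yi
               then Some (mkC x' (upd (upd y' i None) k (Some yi)) (sN s))
               else Some (mkC (upd (upd x' k None) i (Some xk)) y' (sN s))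
      | _, _ => Some (mkC x' y' (sN s))
      end
    end
  end.

Definition coupled_trans (L : nat) (j : R) (s : cstate) : list (R * cstate) :=
  let eps := / INR L in
  flat_map (label_trans L s) (seq 1 (sN s)) ++
  [(eps * j, inject s)] ++
  match remove s with Some s' => [(eps * j, s')] | None => [] end.

Definition card_Dneq (s : cstate) : R :=
  INR (length (filter (fun i => match sx s i, sy s i with
                                | Some a, Some b => negb (Nat.eqb a b)
                                | _, _ => false end) (seq 1 (sN s)))).

Definition init_state (n m : nat) (x0 y0 : nat -> nat) : cstate :=
  mkC (fun i => if andb (Nat.leb 1 i) (Nat.leb i n) then Some (x0 i) else None)
      (fun i => if andb (Nat.leb 1 i) (Nat.leb i (n + m)) then Some (y0 i) else None)
      (n + m).

From Pilot Require Import Defs.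
From Stdlib Require Import Reals List Lia Lra Psatz.
From Coquelicot Require Import Coquelicot.
Import ListNotations.
Open Scope R_scope.

(* Let V(s) be the sum over labels of w(|x_i - y_i|), where w(0) = 0 and on 1..L+1 the
   weight w is a concave quadratic with values in [1, 2] and second difference
   -2/(L+1)^2.  Under the coupling the distance of a discordant pair is a random walk
   on which w has drift at most -lam w, lam = (L+1)^-2; an injected pair is concordant,
   and a removal never increases a pair's distance: the removed particles are rightmost,
   so the pair formed by relabelling is no farther apart than the one it replaces.
   Hence LV <= -lam V, and induction on the number of jumps in Feller's backward
   recursion bounds E_s[f(X_t)] by exp(-lam t) V(s) whenever f <= V.  Finally
   |D_neq| <= V, V(X_0) <= 2n and lam >= eps^2/4. *)

Definition rsum (l : list nat) (c : nat -> R) : R := fold_right Rplus 0 (map c l).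

Lemma rsum_app l1 l2 c : rsum (l1 ++ l2) c = rsum l1 c + rsum l2 c.
Proof. unfold rsum; rewrite map_app; induction l1; simpl; lra. Qed.

Lemma rsum_const l k : rsum l (fun _ => k) = INR (length l) * k.
Proof.
  unfold rsum; induction l; simpl length; [simpl; lra|].
  rewrite S_INR; simpl; rewrite IHl; ring.
Qed.

Lemma rsum_scal l c g : rsum l (fun i => c * g i) = c * rsum l g.
Proof. unfold rsum; induction l; simpl; [ring|]. rewrite IHl; ring. Qed.

Lemma rsum_le l c1 c2 : (forall i, In i l -> c1 i <= c2 i) -> rsum l c1 <= rsum l c2.
Proof. unfold rsum; induction l; simpl; intros H; [lra|]. apply Rplus_le_compat; auto. Qed.

Lemma rsum_ext l c1 c2 : (forall i, In i l -> c1 i = c2 i) -> rsum l c1 = rsum l c2.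
Proof. unfold rsum; induction l; simpl; intros H; [lra|]. rewrite H, IHl; auto. Qed.

Lemma rsum_change_one l c c' i : NoDup l -> In i l -> (forall k, k <> i -> c' k = c k) ->
  rsum l c' - rsum l c = c' i - c i.
Proof.
  unfold rsum; induction l as [|a l IH]; simpl; intros ND Hi H; [contradiction|].
  inversion ND as [|? ? ? ND']; subst; destruct Hi as [<-|Hi].
  - rewrite (map_ext_in c' c l); [lra|]. intros k Hk; apply H; intros ->; auto.
  - rewrite (H a) by (intros ->; auto); specialize (IH ND' Hi H); lra.
Qed.

Definition wsum {S : Type} (l : list (R * S)) (h : S -> R) : R :=
  fold_right Rplus 0 (map (fun p => fst p * h (snd p)) l).

Lemma wsum_app {S : Type} (l1 l2 : list (R * S)) h :
  wsum (l1 ++ l2) h = wsum l1 h + wsum l2 h.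
Proof. unfold wsum; rewrite map_app; induction l1; simpl; lra. Qed.

Lemma wsum_ext {S : Type} (l : list (R * S)) (h1 h2 : S -> R) :
  (forall p, In p l -> h1 (snd p) = h2 (snd p)) -> wsum l h1 = wsum l h2.
Proof. intros H; unfold wsum; f_equal; apply map_ext_in; intros; rewrite H; auto. Qed.

Lemma wsum_flat_map {S : Type} (g : nat -> list (R * S)) l h :
  wsum (flat_map g l) h = rsum l (fun i => wsum (g i) h).
Proof. induction l; simpl; [reflexivity|]. rewrite wsum_app, IHl; reflexivity. Qed.

Lemma wsum_plus {S : Type} (l : list (R * S)) h1 h2 :
  wsum l (fun s => h1 s + h2 s) = wsum l h1 + wsum l h2.
Proof. unfold wsum; induction l; simpl; lra. Qed.

Lemma wsum_scal {S : Type} (l : list (R * S)) c h :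
  wsum l (fun s => c * h s) = c * wsum l h.
Proof. unfold wsum; induction l; simpl; [ring|]. rewrite IHl; ring. Qed.

Lemma wsum_sub_const {S : Type} (l : list (R * S)) h c :
  wsum l (fun s => h s - c) = wsum l h - c * fold_right Rplus 0 (map fst l).
Proof. unfold wsum; induction l; simpl; [ring|]. rewrite IHl; ring. Qed.

Lemma wsum_le {S : Type} (l : list (R * S)) h1 h2 :
  (forall p, In p l -> 0 <= fst p /\ h1 (snd p) <= h2 (snd p)) ->
  wsum l h1 <= wsum l h2.
Proof.
  unfold wsum; induction l as [|p l IH]; simpl; intros H; [lra|].
  destruct (H p (or_introl eq_refl)).
  apply Rplus_le_compat; [apply Rmult_le_compat_l|apply IH]; auto.
Qed.

Lemma wsum_map_const_rate {S : Type} (r : R) (l : list nat) (st : nat -> S) h :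
  wsum (map (fun a => (r, st a)) l) h = rsum l (fun a => r * h (st a)).
Proof. unfold wsum, rsum; rewrite map_map; reflexivity. Qed.

(** * Feller's backward recursion *)

Lemma wsum_continuous {S : Type} (l : list (R * S)) (g : R -> S -> R) x :
  (forall s, continuous (fun t => g t s) x) -> continuous (fun t => wsum l (g t)) x.
Proof.
  intros H; induction l as [|p l IH]; simpl.
  - apply continuous_const.
  - apply (continuous_plus (fun t => fst p * g t (snd p))); auto.
    apply (continuous_mult (fun _ => fst p)); auto using continuous_const.
Qed.

Lemma sum_n_continuous (a : nat -> R -> R) K x :
  (forall k, continuous (a k) x) -> continuous (fun t => sum_n (fun k => a k t) K) x.
Proof.
  intros H; induction K as [|K IH].
  - apply (continuous_ext (a 0%nat)); auto. intros; rewrite sum_O; reflexivity.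
  - apply (continuous_ext (fun t => plus (sum_n (fun k => a k t) K) (a (S K) t))).
    + intros; rewrite sum_Sn; reflexivity.
    + apply (continuous_plus (fun t => sum_n (fun k => a k t) K)); auto.
Qed.

Lemma continuous_exp_scal a x : continuous (fun u => exp (a * u)) x.
Proof. apply (@ex_derive_continuous R_AbsRing R_NormedModule); auto_derive; auto. Qed.

Lemma continuous_reflect (F : R -> R) t x :
  (forall y, continuous F y) -> continuous (fun u => F (t - u)) x.
Proof.
  intros H; apply (continuous_comp (fun u => t - u) F); auto.
  apply (@ex_derive_continuous R_AbsRing R_NormedModule); auto_derive; auto.
Qed.

Lemma ex_RInt_of_continuous (F : R -> R) a b : (forall x, continuous F x) -> ex_RInt F a b.
Proof. intros H; apply (ex_RInt_continuous (V := R_CompleteNormedModule)); auto. Qed.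

Lemma continuous_RInt_0 (F : R -> R) x :
  (forall y, continuous F y) -> continuous (fun t => RInt F 0 t) x.
Proof.
  intros H; apply (@ex_derive_continuous R_AbsRing R_NormedModule); exists (F x).
  apply (is_derive_RInt (V := R_CompleteNormedModule)) with (a := 0); auto.
  apply filter_forall; intros b; apply RInt_correct, ex_RInt_of_continuous, H.
Qed.

Lemma RInt_reflect (F : R -> R) t :
  (forall y, continuous F y) -> RInt (fun u => F (t - u)) 0 t = RInt F 0 t.
Proof.
  intros H.
  assert (E : RInt (fun u => scal (-1) (F (t - u))) 0 t = RInt F (t - 0) (t - t)).
  { apply (RInt_comp (V := R_CompleteNormedModule) F (fun u => t - u) (fun _ => -1)).
    - intros; apply H.
    - intros; split; [auto_derive; auto; ring | apply continuous_const]. }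
  rewrite Rminus_0_r, Rminus_diag, <- (opp_RInt_swap F) in E
    by now apply ex_RInt_of_continuous.
  rewrite (RInt_ext _ (fun u => opp (F (t - u)))) in E
    by (intros; unfold scal, opp; simpl; unfold mult; simpl; ring).
  rewrite (RInt_opp (V := R_CompleteNormedModule)) in E
    by (apply ex_RInt_of_continuous; intros; apply continuous_reflect, H).
  unfold opp in E; simpl in E; lra.
Qed.

Section BackwardEquation.
Variables (St : Type) (trans : St -> list (R * St)) (f : St -> R).

Local Notation q := (total_rate trans).
Local Notation term := (mjp_term trans f).

Lemma ex_RInt_jump_integrand (g : R -> St -> R) s t a b :
  (forall s' y, continuous (fun w => g w s') y) ->
  ex_RInt (fun u => exp (- q s * u) * wsum (trans s) (g (t - u))) a b.
Proof.
  intros Hg; apply ex_RInt_of_continuous; intros y.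
  apply (continuous_mult (fun u => exp (- q s * u))); [apply continuous_exp_scal|].
  apply (wsum_continuous _ (fun u => g (t - u))); intros s'.
  apply (continuous_reflect (fun w => g w s')), Hg.
Qed.

Lemma mjp_term_succ k t s :
  term (S k) t s = RInt (fun u => exp (- q s * u) * wsum (trans s) (term k (t - u))) 0 t.
Proof. reflexivity. Qed.

Lemma mjp_term_continuous k s x : continuous (fun t => term k t s) x.
Proof.
  revert s x; induction k as [|k IH]; intros s x; simpl.
  - apply (continuous_mult (fun t => exp (- q s * t)));
      auto using continuous_exp_scal, continuous_const.
  - set (H := fun w => exp (q s * w) * wsum (trans s) (term k w)).
    assert (HC : forall y, continuous H y).
    { intros y; apply (continuous_mult (fun w => exp (q s * w))); [apply continuous_exp_scal|].
      apply (wsum_continuous _ (term k)); auto. }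
    (* substituting [w = t - u] moves the time dependence out of the integrand *)
    apply (continuous_ext (fun t => exp (- q s * t) * RInt H 0 t)).
    + intros t; rewrite <- (RInt_reflect H) by auto.
      rewrite <- (RInt_scal (V := R_CompleteNormedModule))
        by (apply ex_RInt_of_continuous; intros; apply continuous_reflect, HC).
      apply RInt_ext; intros u _; unfold H, scal; simpl; unfold mult; simpl.
      rewrite <- Rmult_assoc, <- exp_plus.
      replace (- q s * t + q s * (t - u)) with (- q s * u) by ring; reflexivity.
    + apply (continuous_mult (fun t => exp (- q s * t))).
      * apply continuous_exp_scal.
      * apply continuous_RInt_0, HC.
Qed.

Lemma mjp_partial_continuous K s x :
  continuous (fun t => sum_n (fun k => term k t s) K) x.
Proof.
  apply (sum_n_continuous (fun k t => term k t s)); intros; apply mjp_term_continuous.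
Qed.

Lemma mjp_partial_succ K t s :
  sum_n (fun k => term k t s) (S K) =
  exp (- q s * t) * f s +
  RInt (fun u => exp (- q s * u) *
          wsum (trans s) (fun s' => sum_n (fun k => term k (t - u) s') K)) 0 t.
Proof.
  induction K as [|K IH].
  - rewrite sum_Sn, sum_O, (mjp_term_succ 0); change (plus ?a ?b) with (a + b); f_equal.
    apply RInt_ext; intros u _; f_equal.
    apply wsum_ext; intros p _; rewrite sum_O; reflexivity.
  - rewrite sum_Sn, IH; change (plus ?a ?b) with (a + b); rewrite Rplus_assoc; f_equal.
    rewrite (mjp_term_succ (S K)); change (?a + ?b = ?c) with (plus a b = c).
    rewrite <- (RInt_plus (V := R_CompleteNormedModule)).
    + apply RInt_ext; intros u _; change (plus ?a ?b) with (a + b).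
      rewrite <- Rmult_plus_distr_l, <- wsum_plus; f_equal.
      apply wsum_ext; intros p _; rewrite sum_Sn; reflexivity.
    + apply (ex_RInt_jump_integrand (fun w s' => sum_n (fun k => term k w s') K)).
      intros; apply mjp_partial_continuous.
    + apply (ex_RInt_jump_integrand (term (S K))).
      intros; apply mjp_term_continuous.
Qed.

End BackwardEquation.

(** * Lyapunov bound for the minimal process *)

Lemma exp_RInt_0 a t : a * RInt (fun u => exp (- a * u)) 0 t = 1 - exp (- a * t).
Proof.
  rewrite <- (RInt_scal (V := R_CompleteNormedModule))
    by (apply ex_RInt_of_continuous; intros; apply continuous_exp_scal).
  apply is_RInt_unique.
  replace (1 - exp (- a * t)) with (minus (- exp (- a * t)) (- exp (- a * 0)))
    by (rewrite Rmult_0_r, exp_0; unfold minus, plus, opp; simpl; ring).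
  apply (is_RInt_derive (V := R_CompleteNormedModule) (fun u => - exp (- a * u))).
  - intros x _; auto_derive; auto; unfold scal; simpl; unfold mult; simpl; ring.
  - intros x _; apply (continuous_mult (fun _ => a));
      auto using continuous_const, continuous_exp_scal.
Qed.

Lemma exp_le_exp_of_le x y : x <= y -> exp x <= exp y.
Proof. intros [Hlt | ->]; [left; apply exp_increasing, Hlt | lra]. Qed.

Lemma RInt_exp_nonneg a t : 0 <= t -> 0 <= RInt (fun u => exp (a * u)) 0 t.
Proof.
  intros Ht; apply RInt_ge_0; auto.
  - apply ex_RInt_of_continuous; intros; apply continuous_exp_scal.
  - intros; left; apply exp_pos.
Qed.

(* With [a = q - lam] and [I = RInt (exp (- a u)) 0 t], the drift inequality turns one
   step of the backward equation into [exp (- lam t) V]. *)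
Lemma lyapunov_step q lam t v w I :
  0 <= w -> w <= (q - lam) * v -> 0 <= I ->
  (q - lam) * I = 1 - exp (- (q - lam) * t) ->
  exp (- q * t) * v + exp (- lam * t) * w * I <= exp (- lam * t) * v.
Proof.
  intros Hw Hdrift HI HaI.
  replace (exp (- q * t)) with (exp (- lam * t) * exp (- (q - lam) * t))
    by (rewrite <- exp_plus; f_equal; ring).
  assert (0 < exp (- lam * t)) by apply exp_pos.
  assert (w * I <= (q - lam) * v * I) by (apply Rmult_le_compat_r; auto).
  nra.
Qed.

Section LyapunovBound.
Variables (St : Type) (trans : St -> list (R * St)) (f V : St -> R).
Variables (P : St -> Prop) (lam : R).
Hypothesis trans_closed :
  forall s, P s -> forall p, In p (trans s) -> 0 <= fst p /\ P (snd p).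
Hypothesis f_le_V : forall s, P s -> f s <= V s.
Hypothesis V_nonneg : forall s, P s -> 0 <= V s.
Hypothesis V_drift :
  forall s, P s -> wsum (trans s) V <= (total_rate trans s - lam) * V s.

Local Notation q := (total_rate trans).
Local Notation term := (mjp_term trans f).

Lemma wsum_V_nonneg s : P s -> 0 <= wsum (trans s) V.
Proof.
  intros Hs; rewrite <- (Rmult_0_l (wsum (trans s) V)), <- wsum_scal.
  apply wsum_le; intros p Hp; destruct (trans_closed s Hs p Hp) as [? HP].
  rewrite Rmult_0_l; auto.
Qed.

Lemma jump_integral_le (g : R -> St -> R) s t : P s -> 0 <= t ->
  (forall s' y, continuous (fun w => g w s') y) ->
  (forall s' w, P s' -> 0 <= w -> g w s' <= exp (- lam * w) * V s') ->
  RInt (fun u => exp (- q s * u) * wsum (trans s) (g (t - u))) 0 t <=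
  exp (- lam * t) * wsum (trans s) V * RInt (fun u => exp (- (q s - lam) * u)) 0 t.
Proof.
  intros Hs Ht Hg Hbound.
  rewrite <- (RInt_scal (V := R_CompleteNormedModule))
    by (apply ex_RInt_of_continuous; intros; apply continuous_exp_scal).
  apply RInt_le; auto.
  - apply ex_RInt_jump_integrand, Hg.
  - apply ex_RInt_of_continuous; intros y; unfold scal; simpl; unfold mult; simpl.
    apply (continuous_mult (fun _ => exp (- lam * t) * wsum (trans s) V));
      auto using continuous_const, continuous_exp_scal.
  - intros u Hu; unfold scal; simpl; unfold mult; simpl.
    apply Rle_trans with
      (exp (- q s * u) * wsum (trans s) (fun s' => exp (- lam * (t - u)) * V s')).
    + apply Rmult_le_compat_l; [left; apply exp_pos|].
      apply wsum_le; intros p Hp; destruct (trans_closed s Hs p Hp) as [? HP].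
      split; auto; apply Hbound; auto; lra.
    + assert (E : exp (- q s * u) * exp (- lam * (t - u))
                  = exp (- lam * t) * exp (- (q s - lam) * u))
        by (rewrite <- !exp_plus; f_equal; ring).
      rewrite wsum_scal, <- Rmult_assoc, E; apply Req_le; ring.
Qed.

Lemma mjp_partial_le_lyapunov K s t : P s -> 0 <= t ->
  sum_n (fun k => term k t s) K <= exp (- lam * t) * V s.
Proof.
  revert s t; induction K as [|K IH]; intros s t Hs Ht.
  all: set (I := RInt (fun u => exp (- (q s - lam) * u)) 0 t).
  all: assert (HI : 0 <= I) by apply RInt_exp_nonneg, Ht.
  all: pose proof (lyapunov_step (q s) lam t (V s) (wsum (trans s) V) I
         (wsum_V_nonneg s Hs) (V_drift s Hs) HI (exp_RInt_0 _ t)).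
  all: assert (exp (- q s * t) * f s <= exp (- q s * t) * V s)
         by (apply Rmult_le_compat_l; [left; apply exp_pos | auto]).
  - assert (0 <= exp (- lam * t) * wsum (trans s) V * I).
    { apply Rmult_le_pos; auto.
      apply Rmult_le_pos; [left; apply exp_pos | apply wsum_V_nonneg; auto]. }
    rewrite sum_O; simpl; lra.
  - assert (RInt (fun u => exp (- q s * u) *
              wsum (trans s) (fun s' => sum_n (fun k => term k (t - u) s') K)) 0 t <=
            exp (- lam * t) * wsum (trans s) V * I).
    { apply (jump_integral_le (fun w s' => sum_n (fun k => term k w s') K)); auto.
      intros; apply mjp_partial_continuous. }
    rewrite mjp_partial_succ; lra.
Qed.

Lemma mjp_expect_le_lyapunov s t : P s -> 0 <= t ->
  Rbar_le (mjp_expect trans f t s) (Finite (exp (- lam * t) * V s)).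
Proof.
  intros Hs Ht; unfold mjp_expect.
  rewrite <- (Lim_seq_const (exp (- lam * t) * V s)).
  apply Lim_seq_le_loc; exists 0%nat; intros K _; apply mjp_partial_le_lyapunov; auto.
Qed.

End LyapunovBound.

(** * The distance weight *)

Section DistanceWeight.
Variable L : nat.

Definition nsites : R := INR L + 1.
Definition lam : R := / (nsites * nsites).

(* Zero at distance 0, and on 1..L+1 a concave quadratic rising from 1 towards 2 whose
   second difference is [- 2 / nsites^2]; the jump at 0 supplies the drift at distance 1. *)
Definition weight (d : nat) : R :=
  match d with
  | O => 0
  | S e => 1 + INR e * (2 * nsites - INR (S e)) / (nsites * nsites)
  end.

Lemma nsites_ge_1 : 1 <= nsites.
Proof. unfold nsites; pose proof (pos_INR L); lra. Qed.

Lemma weight_le_2 d : weight d <= 2.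
Proof.
  destruct d as [|e]; unfold weight; [lra|]; pose proof nsites_ge_1; pose proof (pos_INR e).
  rewrite S_INR; apply Rplus_le_compat_l, Rle_div_l; [nra|].
  pose proof (Rle_0_sqr (nsites - INR e)); unfold Rsqr in *; nra.
Qed.

Lemma weight_ge_1 e : (S e <= L)%nat -> 1 <= weight (S e).
Proof.
  intros He; unfold weight; pose proof nsites_ge_1; pose proof (pos_INR e).
  assert (INR (S e) <= INR L) by (apply le_INR; lia).
  assert (0 <= INR e * (2 * nsites - INR (S e)) / (nsites * nsites)); [|lra].
  apply Rmult_le_pos; [unfold nsites in *; nra|].
  left; apply Rinv_0_lt_compat; nra.
Qed.

Lemma weight_nonneg d : (d <= L)%nat -> 0 <= weight d.
Proof. destruct d; intros Hd; [simpl; lra|]; pose proof (weight_ge_1 d Hd); lra. Qed.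

Lemma weight_le_succ d : (d <= L)%nat -> weight d <= weight (S d).
Proof.
  intros Hd; destruct d as [|e]; [simpl; lra|].
  pose proof nsites_ge_1; unfold weight; rewrite !S_INR.
  assert (INR e + 1 <= INR L) by (rewrite <- S_INR; apply le_INR; lia).
  apply Rplus_le_compat_l; unfold Rdiv; apply Rmult_le_compat_r.
  - left; apply Rinv_0_lt_compat; nra.
  - unfold nsites in *; nra.
Qed.

Lemma weight_mono d1 d2 : (d1 <= d2 <= L)%nat -> weight d1 <= weight d2.
Proof.
  intros [H12 H2]; induction H12; [lra|].
  apply Rle_trans with (weight m); [apply IHle; lia | apply weight_le_succ; lia].
Qed.

Lemma weight_drift e : (S e <= L)%nat ->
  weight (S (S e)) + weight e - 2 * weight (S e) <= - lam * weight (S e).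
Proof.
  intros He; pose proof nsites_ge_1; unfold lam.
  assert (Hinv : 0 < / (nsites * nsites) <= 1).
  { split; [apply Rinv_0_lt_compat; nra|].
    rewrite <- Rinv_1; apply Rinv_le_contravar; nra. }
  destruct e as [|e].
  - replace (weight 2 + weight 0 - 2 * weight 1)
      with ((2 * nsites - 2) / (nsites * nsites) - 1) by (simpl; field; lra).
    replace (weight 1) with 1 by (simpl; field; lra).
    assert ((2 * nsites - 1) / (nsites * nsites) <= 1); [|unfold Rdiv in *; nra].
    apply Rle_div_l; [nra|]; pose proof (Rle_0_sqr (nsites - 1)); unfold Rsqr in *; nra.
  - replace (weight (S (S (S e))) + weight (S e) - 2 * weight (S (S e)))
      with (- 2 * / (nsites * nsites)) by (unfold weight; rewrite !S_INR; field; lra).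
    pose proof (weight_le_2 (S (S e))); nra.
Qed.

Lemma lam_ge : (0 < L)%nat -> / 4 * (/ INR L) ^ 2 <= lam.
Proof.
  intros L_pos.
  assert (1 <= INR L) by (apply (le_INR 1); lia).
  unfold lam, nsites.
  replace (/ 4 * (/ INR L) ^ 2) with (/ (4 * (INR L * INR L))) by (field; lra).
  apply Rinv_le_contravar; nra.
Qed.

End DistanceWeight.

(** * The coupled process *)

(* [rightmost f N] is by conversion [fold_left (rightmost_step f) (seq 1 N) None] *)
Definition rightmost_step (f : nat -> option nat) (acc : option nat) (i : nat) : option nat :=
  match f i with
  | None => acc
  | Some p => match acc with
              | None => Some i
              | Some i' => match f i' with
                           | Some p' => if Nat.leb p' p then Some i else acc
                           | None => Some i
                           end
              end
  end.

Definition rightmost_of (f : nat -> option nat) (l : list nat) (acc : option nat) : Prop :=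
  match acc with
  | None => forall j, In j l -> f j = None
  | Some i => In i l /\ exists p, f i = Some p /\
                forall j p', In j l -> f j = Some p' -> (p' <= p)%nat
  end.

Lemma rightmost_of_step f l acc a :
  rightmost_of f l acc -> rightmost_of f (l ++ [a]) (rightmost_step f acc a).
Proof.
  unfold rightmost_step; destruct (f a) as [p|] eqn:Ea.
  2:{ destruct acc as [i|]; simpl; setoid_rewrite in_app_iff; simpl.
      - intros [Hi [p0 [Ei Hmax]]]; split; [auto|]; exists p0; split; [auto|].
        intros j p' [Hj|[<-|[]]] Ej; [apply (Hmax j p' Hj Ej) | congruence].
      - intros Hnone j [Hj|[<-|[]]]; auto. }
  assert (Hnew : forall p0, (p0 <= p)%nat ->
            (forall j p', In j l -> f j = Some p' -> (p' <= p0)%nat) ->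
            rightmost_of f (l ++ [a]) (Some a)).
  { intros p0 Hp0 Hmax; simpl; setoid_rewrite in_app_iff; simpl.
    split; [auto|]; exists p; split; [auto|].
    intros j p' [Hj|[<-|[]]] Ej;
      [specialize (Hmax j p' Hj Ej) | rewrite Ea in Ej; injection Ej]; lia. }
  destruct acc as [i|]; simpl.
  - intros [Hi [p0 [Ei Hmax]]]; rewrite Ei; destruct (Nat.leb_spec p0 p).
    + apply (Hnew p0); auto.
    + simpl; setoid_rewrite in_app_iff; simpl.
      split; [auto|]; exists p0; split; [auto|].
      intros j p' [Hj|[<-|[]]] Ej;
        [apply (Hmax j p' Hj Ej) | rewrite Ea in Ej; injection Ej; lia].
  - intros Hnone; apply (Hnew 0%nat); [lia|].
    intros j p' Hj Ej; rewrite Hnone in Ej by auto; discriminate.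
Qed.

Lemma rightmost_of_fold f l : forall pre acc, rightmost_of f pre acc ->
  rightmost_of f (pre ++ l) (fold_left (rightmost_step f) l acc).
Proof.
  induction l as [|a l IH]; intros pre acc H; simpl.
  - rewrite app_nil_r; exact H.
  - replace (pre ++ a :: l) with ((pre ++ [a]) ++ l) by (rewrite <- app_assoc; reflexivity).
    apply IH, rightmost_of_step, H.
Qed.

Lemma rightmost_spec f N i : rightmost f N = Some i ->
  (1 <= i <= N)%nat /\ exists p, f i = Some p /\
    forall j p', (1 <= j <= N)%nat -> f j = Some p' -> (p' <= p)%nat.
Proof.
  intros H.
  assert (Hr := rightmost_of_fold f (seq 1 N) [] None (fun j Hj => match Hj with end)).
  change (fold_left (rightmost_step f) (seq 1 N) None) with (rightmost f N) in Hr.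
  rewrite H in Hr; destruct Hr as [Hi [p [Ep Hmax]]]; simpl in Hi; apply in_seq in Hi.
  split; [lia|]; exists p; split; [auto|].
  intros j p' Hj; apply Hmax; simpl; apply in_seq; lia.
Qed.

Definition dist (a b : nat) : nat := (a - b + (b - a))%nat.

Lemma upd_eq (g : nat -> option nat) i v : upd g i v i = v.
Proof. unfold upd; rewrite Nat.eqb_refl; reflexivity. Qed.

Lemma upd_neq (g : nat -> option nat) i v k : k <> i -> upd g i v k = g k.
Proof. intros H; unfold upd; apply Nat.eqb_neq in H; rewrite H; reflexivity. Qed.

Section CoupledPotential.
Variable L : nat.

Definition pair_weight (ox oy : option nat) : R :=
  match ox, oy with Some a, Some b => weight L (dist a b) | _, _ => 0 end.

Definition potential (s : cstate) : R :=
  rsum (seq 1 (sN s)) (fun i => pair_weight (sx s i) (sy s i)).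

Definition bounded (g : nat -> option nat) : Prop := forall i a, g i = Some a -> (a <= L)%nat.

Definition in_box (s : cstate) : Prop := bounded (sx s) /\ bounded (sy s).

Lemma bounded_upd g i v : bounded g -> (forall a, v = Some a -> (a <= L)%nat) ->
  bounded (upd g i v).
Proof. intros Hg Hv k a; unfold upd; destruct (Nat.eqb k i); [apply Hv | apply Hg]. Qed.

Lemma pair_weight_None_r ox : pair_weight ox None = 0.
Proof. destruct ox; reflexivity. Qed.

Lemma pair_weight_nonneg g1 g2 i : bounded g1 -> bounded g2 -> 0 <= pair_weight (g1 i) (g2 i).
Proof.
  intros H1 H2; unfold pair_weight.
  destruct (g1 i) eqn:E1; destruct (g2 i) eqn:E2; try lra.
  apply weight_nonneg; apply H1 in E1; apply H2 in E2; unfold dist; lia.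
Qed.

Lemma potential_nonneg s : in_box s -> 0 <= potential s.
Proof.
  intros [Hx Hy]; unfold potential.
  replace 0 with (rsum (seq 1 (sN s)) (fun _ => 0)) by (rewrite rsum_const; ring).
  apply rsum_le; intros; apply pair_weight_nonneg; auto.
Qed.

(* every label with [x_i <> y_i] has weight at least 1 *)
Lemma card_Dneq_le_potential s : in_box s -> card_Dneq s <= potential s.
Proof.
  intros [Hx Hy]; unfold card_Dneq, potential.
  assert (Hcount : forall l (p : nat -> bool),
             INR (length (filter p l)) = rsum l (fun i => if p i then 1 else 0)).
  { unfold rsum; induction l as [|a l IH]; intros p; simpl; [reflexivity|].
    destruct (p a); simpl length; rewrite ?S_INR, IH; simpl; ring. }
  rewrite Hcount; apply rsum_le; intros i _; unfold pair_weight.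
  destruct (sx s i) as [a|] eqn:Ea; [|lra]; destruct (sy s i) as [b|] eqn:Eb; [|lra].
  apply Hx in Ea; apply Hy in Eb.
  destruct (Nat.eqb_spec a b); simpl.
  - apply weight_nonneg; unfold dist; lia.
  - destruct (dist a b) as [|e] eqn:Ed; unfold dist in Ed; [lia|].
    apply weight_ge_1; lia.
Qed.

Lemma potential_inject s : potential (inject s) = potential s.
Proof.
  unfold potential, inject; simpl sN; rewrite seq_S, rsum_app.
  unfold rsum at 2; simpl; rewrite !upd_eq; simpl; rewrite !Rplus_0_r.
  apply rsum_ext; intros k Hk; apply in_seq in Hk.
  rewrite !upd_neq by lia; reflexivity.
Qed.

Local Ltac compare_pointwise :=
  intros l; cbn [sx sy]; unfold upd;
  repeat match goal with |- context [Nat.eqb ?a ?b] => destruct (Nat.eqb_spec a b); subst end;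
  try congruence;
  rewrite ?pair_weight_None_r; try change (pair_weight None ?o) with 0;
  try lra; try (apply pair_weight_nonneg; assumption).

Lemma remove_spec s s' : in_box s -> Defs.remove s = Some s' ->
  sN s' = sN s /\ in_box s' /\
  forall l, pair_weight (sx s' l) (sy s' l) <= pair_weight (sx s l) (sy s l).
Proof.
  intros [Hx Hy] H; unfold Defs.remove in H.
  destruct (rightmost (sy s) (sN s)) as [k|] eqn:Ek; [|discriminate].
  destruct (rightmost_spec _ _ _ Ek) as [Hk [yk [Eyk Hmaxy]]].
  destruct (rightmost (sx s) (sN s)) as [i|] eqn:Ei.
  2:{ injection H as <-; split; [reflexivity|]; split.
      - split; [|apply bounded_upd]; auto; discriminate.
      - compare_pointwise. }
  destruct (rightmost_spec _ _ _ Ei) as [Hi [xi [Exi Hmaxx]]].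
  destruct (sx s k) as [xk|] eqn:Exk, (sy s i) as [yi|] eqn:Eyi.
  2-4: injection H as <-; split; [reflexivity|]; split;
       [split; apply bounded_upd; auto; discriminate | compare_pointwise].
  destruct (Nat.eqb_spec i k) as [<-|Hik].
  { injection H as <-; split; [reflexivity|]; split;
      [split; apply bounded_upd; auto; discriminate | compare_pointwise]. }
  (* by maximality of [yk] (resp. [xi]) the relabelled pair is no farther apart than before *)
  destruct (Nat.leb_spec xk yi); injection H as <-; split; try reflexivity; split.
  - split; repeat apply bounded_upd; auto; try discriminate.
    intros a [= <-]; eauto.
  - compare_pointwise.
    assert (yi <= yk)%nat by (apply (Hmaxy i yi); auto).
    rewrite Exk, Eyk; apply weight_mono; apply Hx in Exk; apply Hy in Eyk; unfold dist; lia.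
  - split; repeat apply bounded_upd; auto; try discriminate.
    intros a [= <-]; eauto.
  - compare_pointwise.
    assert (xk <= xi)%nat by (apply (Hmaxx k xk); auto).
    rewrite Exi, Eyi; apply weight_mono; apply Hx in Exi; apply Hy in Eyi; unfold dist; lia.
Qed.

Lemma moves_bounded a a' : (a <= L)%nat -> In a' (moves L a) -> (a' <= L)%nat.
Proof.
  unfold moves; intros Ha Hin; apply in_app_or in Hin.
  destruct (Nat.leb_spec (S a) L), a; simpl in Hin; intuition lia.
Qed.

(* one coordinate moves at distance [S e]: one move always brings the pair to distance [e],
   the other (if not suppressed at the boundary) to [S (S e)] *)
Lemma moves_weight_drift a b e : (a <= L)%nat -> (b <= L)%nat -> dist a b = S e ->
  rsum (moves L a) (fun a' => weight L (dist a' b) - weight L (S e)) <=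
  weight L (S (S e)) + weight L e - 2 * weight L (S e).
Proof.
  intros Ha Hb Hd.
  assert (Hup := weight_le_succ L (S e) ltac:(unfold dist in Hd; lia)).
  unfold moves; destruct (Nat.ltb_spec a b), (Nat.leb_spec (S a) L), a as [|a0];
    unfold rsum; cbn [map fold_right app];
    try (exfalso; unfold dist in Hd; lia);
    repeat match goal with
    | |- context [dist ?x ?y] =>
        first [ replace (dist x y) with e by (unfold dist in *; lia)
              | replace (dist x y) with (S (S e)) by (unfold dist in *; lia) ]
    end; lra.
Qed.

Lemma potential_change_one s s' i : In i (seq 1 (sN s)) -> sN s' = sN s ->
  (forall l, l <> i -> sx s' l = sx s l /\ sy s' l = sy s l) ->
  potential s' - potential s = pair_weight (sx s' i) (sy s' i) - pair_weight (sx s i) (sy s i).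
Proof.
  intros Hi HN Hsame; unfold potential; rewrite HN.
  apply (rsum_change_one _ (fun l => pair_weight (sx s l) (sy s l))
                           (fun l => pair_weight (sx s' l) (sy s' l))); auto using seq_NoDup.
  intros k Hk; destruct (Hsame k Hk) as [-> ->]; reflexivity.
Qed.

Lemma label_trans_local s i p : In p (label_trans L s i) ->
  sN (snd p) = sN s /\ forall l, l <> i -> sx (snd p) l = sx s l /\ sy (snd p) l = sy s l.
Proof.
  unfold label_trans; intros H.
  destruct (sx s i) as [a|], (sy s i) as [b|]; try contradiction;
    [destruct (Nat.eqb a b); [|apply in_app_or in H; destruct H as [H|H]]|];
    apply in_map_iff in H; destruct H as [a' [<- _]];
    split; try reflexivity; intros l Hl; cbn [snd sx sy]; rewrite ?upd_neq by exact Hl; auto.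
Qed.

Lemma label_drift s i : in_box s -> In i (seq 1 (sN s)) ->
  wsum (label_trans L s i) (fun s' => potential s' - potential s) <=
  - lam L * pair_weight (sx s i) (sy s i).
Proof.
  intros [Hx Hy] Hi.
  rewrite (wsum_ext _ _
             (fun s' => pair_weight (sx s' i) (sy s' i) - pair_weight (sx s i) (sy s i)))
    by (intros p Hp; destruct (label_trans_local s i p Hp); apply potential_change_one; auto).
  unfold label_trans.
  destruct (sx s i) as [a|] eqn:Ea, (sy s i) as [b|] eqn:Eb.
  - destruct (Nat.eqb_spec a b) as [<-|Hab].
    + rewrite wsum_map_const_rate, (rsum_ext _ _ (fun _ => 0)), rsum_const.
      * unfold pair_weight, dist; rewrite Nat.sub_diag; simpl; lra.
      * intros a' _; cbn [sx sy]; rewrite !upd_eq; unfold pair_weight, dist.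
        rewrite !Nat.sub_diag; simpl; ring.
    + pose proof (Hx i a Ea); pose proof (Hy i b Eb).
      destruct (dist a b) as [|e] eqn:Ed; [unfold dist in Ed; lia|].
      rewrite wsum_app, !wsum_map_const_rate, !rsum_scal.
      rewrite (rsum_ext (moves L a) _ (fun a' => weight L (dist a' b) - weight L (S e)))
        by (intros a' _; cbn [sx sy]; rewrite upd_eq, ?Ea, ?Eb; cbn [pair_weight];
            rewrite Ed; reflexivity).
      rewrite (rsum_ext (moves L b) _ (fun b' => weight L (dist b' a) - weight L (S e)))
        by (intros b' _; cbn [sx sy]; rewrite upd_eq, ?Ea, ?Eb; cbn [pair_weight]; rewrite Ed;
            unfold dist; do 2 f_equal; lia).
      unfold pair_weight; rewrite Ed.
      pose proof (moves_weight_drift a b e ltac:(auto) ltac:(auto) Ed).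
      pose proof (moves_weight_drift b a e ltac:(auto) ltac:(auto)
                    ltac:(unfold dist in *; lia)).
      pose proof (weight_drift L e ltac:(unfold dist in Ed; lia)).
      lra.
  - unfold wsum; simpl; lra.
  - rewrite wsum_map_const_rate, (rsum_ext _ _ (fun _ => 0)), rsum_const.
    + simpl; lra.
    + intros b' _; cbn [sx sy]; rewrite Ea; simpl; ring.
  - unfold wsum; simpl; lra.
Qed.

Lemma label_trans_in_box s i p : in_box s -> In p (label_trans L s i) ->
  0 <= fst p /\ in_box (snd p).
Proof.
  intros [Hx Hy] Hp; unfold label_trans in Hp.
  assert (Hmove : forall g a a', bounded g -> g i = Some a -> In a' (moves L a) ->
                    bounded (upd g i (Some a'))).
  { intros g a a' Hg Ea Ha'; apply bounded_upd; auto.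
    intros c [= <-]; apply (moves_bounded a); eauto. }
  destruct (sx s i) as [a|] eqn:Ea, (sy s i) as [b|] eqn:Eb; try contradiction;
    [destruct (Nat.eqb_spec a b) as [<-|]; [|apply in_app_or in Hp; destruct Hp as [Hp|Hp]]|];
    apply in_map_iff in Hp; destruct Hp as [a' [<- Ha']];
    (split; [simpl; lra | split]); cbn [snd sx sy]; eauto.
Qed.

Section CoupledTransitions.
Variable j : R.
Hypothesis L_pos : (0 < L)%nat.
Hypothesis j_nonneg : 0 <= j.

Lemma jump_rate_nonneg : 0 <= / INR L * j.
Proof. apply Rmult_le_pos; auto; left; apply Rinv_0_lt_compat, lt_0_INR; lia. Qed.

Lemma coupled_trans_in_box s : in_box s ->
  forall p, In p (coupled_trans L j s) -> 0 <= fst p /\ in_box (snd p).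
Proof.
  intros Hs p Hp; unfold coupled_trans in Hp; apply in_app_or in Hp.
  destruct Hp as [Hp|[<-|Hp]].
  - apply in_flat_map in Hp; destruct Hp as [i [_ Hp]]; apply (label_trans_in_box s i); auto.
  - split; [apply jump_rate_nonneg|]; destruct Hs as [Hx Hy].
    split; apply bounded_upd; auto; intros a [= <-]; lia.
  - destruct (Defs.remove s) as [s'|] eqn:E; [|contradiction].
    destruct Hp as [<-|[]]; split; [apply jump_rate_nonneg|].
    apply (remove_spec s s' Hs E).
Qed.

Lemma coupled_drift s : in_box s ->
  wsum (coupled_trans L j s) potential <=
  (total_rate (coupled_trans L j) s - lam L) * potential s.
Proof.
  intros Hs.
  cut (wsum (coupled_trans L j s) (fun s' => potential s' - potential s)
       <= - lam L * potential s).
  { rewrite wsum_sub_const; unfold total_rate; lra. }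
  unfold coupled_trans; rewrite !wsum_app, wsum_flat_map.
  assert (Hlabels : rsum (seq 1 (sN s)) (fun i => wsum (label_trans L s i)
                      (fun s' => potential s' - potential s)) <= - lam L * potential s).
  { unfold potential at 3; rewrite <- rsum_scal; apply rsum_le; intros i Hi.
    apply label_drift; auto. }
  assert (Hinject : wsum [(/ INR L * j, inject s)] (fun s' => potential s' - potential s) = 0)
    by (unfold wsum; simpl; rewrite potential_inject; ring).
  assert (Hremove :
            wsum (match Defs.remove s with Some s' => [(/ INR L * j, s')] | None => [] end)
                 (fun s' => potential s' - potential s) <= 0).
  { destruct (Defs.remove s) as [s'|] eqn:E; unfold wsum; simpl; [|lra].
    destruct (remove_spec s s' Hs E) as [HN [_ Hle]].
    assert (potential s' <= potential s)
      by (unfold potential; rewrite HN; apply rsum_le; auto).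
    pose proof jump_rate_nonneg; nra. }
  lra.
Qed.

Lemma coupled_expect_le s t : in_box s -> 0 <= t ->
  Rbar_le (mjp_expect (coupled_trans L j) card_Dneq t s)
          (Finite (exp (- lam L * t) * potential s)).
Proof.
  intros Hs Ht; apply (mjp_expect_le_lyapunov _ _ _ potential in_box); auto.
  - apply coupled_trans_in_box.
  - apply card_Dneq_le_potential.
  - apply potential_nonneg.
  - apply coupled_drift.
Qed.

End CoupledTransitions.
End CoupledPotential.

Lemma init_state_in_box L n m x0 y0 :
  (forall i, (1 <= i <= n)%nat -> (x0 i <= L)%nat) ->
  (forall i, (1 <= i <= n + m)%nat -> (y0 i <= L)%nat) ->
  in_box L (init_state n m x0 y0).
Proof.
  intros Hx Hy; split; intros i a; cbn [init_state sx sy];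
    destruct (Nat.leb_spec 1 i), (Nat.leb_spec i n), (Nat.leb_spec i (n + m));
    simpl; intros E; try discriminate; injection E as <-; auto.
Qed.

Lemma potential_init_le L n m x0 y0 : potential L (init_state n m x0 y0) <= 2 * INR n.
Proof.
  unfold potential; cbn [init_state sx sy sN].
  apply Rle_trans with (rsum (seq 1 (n + m)) (fun l => if Nat.leb l n then 2 else 0)).
  - apply rsum_le; intros l _.
    destruct (Nat.leb_spec 1 l), (Nat.leb_spec l n), (Nat.leb_spec l (n + m));
      simpl; try lra; apply weight_le_2.
  - rewrite seq_app, rsum_app.
    rewrite (rsum_ext (seq 1 n) _ (fun _ => 2)), (rsum_ext (seq (1 + n) m) _ (fun _ => 0)).
    + rewrite !rsum_const, !length_seq; lra.
    + intros l Hl; apply in_seq in Hl; destruct (Nat.leb_spec l n); [lia | reflexivity].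
    + intros l Hl; apply in_seq in Hl; destruct (Nat.leb_spec l n); [reflexivity | lia].
Qed.

Theorem theorem4p6 (j : R) (hj : 0 < j) :
  exists c b : R, 0 < c /\ 0 < b /\
  forall (L : nat), (0 < L)%nat ->
  forall (t : R), 0 <= t ->
  forall (n m : nat), (0 < n)%nat ->
  forall (x0 y0 : nat -> nat),
    (forall i, (1 <= i <= n)%nat -> (x0 i <= L)%nat) ->
    (forall i, (1 <= i <= n + m)%nat -> (y0 i <= L)%nat) ->
    Rbar_le (mjp_expect (coupled_trans L j) card_Dneq t (init_state n m x0 y0))
            (Finite (c * INR n * exp (- b * (/ INR L) ^ 2 * t))).
Proof.
  exists 2, (/ 4); split; [lra|]; split; [lra|].
  intros L HL t Ht n m _ x0 y0 Hx Hy.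
  assert (Hs0 : in_box L (init_state n m x0 y0)) by (apply init_state_in_box; auto).
  eapply Rbar_le_trans; [apply (coupled_expect_le L j); auto; lra|]; cbn [Rbar_le].
  assert (Hexp : exp (- lam L * t) <= exp (- / 4 * (/ INR L) ^ 2 * t))
    by (apply exp_le_exp_of_le; pose proof (lam_ge L HL); nra).
  pose proof (potential_init_le L n m x0 y0); pose proof (potential_nonneg L _ Hs0).
  pose proof (exp_pos (- lam L * t)).
  rewrite (Rmult_comm (2 * INR n)); apply Rmult_le_compat; lra.
Qed.
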